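(* There exists a poset $Q$ for which $AM_3(Q)$ is bqo but $\bigcup AM_3(Q)$ is not bqo.
   Context: $AM_3(Q)$ is the set of three-element maximal antichains of $Q$, ordered by domination ($X\leq Y$ iff each $x\in X$ is below some $y\in Y$), and $\bigcup AM_3(Q)$ is the union of these antichains with the order induced from $Q$. Barriers and bqo: finite subsets of $\mathbb{N}$ are identified with their increasing enumerations; $s\triangleleft t$ means there is a finite $r\subseteq\mathbb{N}$ with $s$ a proper initial segment of $r$ and $t$ equal to $r$ minus its least element. A barrier is an infinite set $B$ of finite subsets of $\mathbb{N}$, no member a proper subset of another, such that every infinite $X\subseteq\bigcup B$ has a nonempty initial segment in $B$; its order type is that of $B$ under the lexicographic order. A map $f$ from a barrier into a quasi-order $Q$ is good if $f(s)\leq f(t)$ for some $s\triangleleft t$; $Q$ is $\alpha$-bqo if every map from a barrier of order type at most $\alpha$ into $Q$ is good, and bqo if it is $\alpha$-bqo for all countable $\alpha$. *)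

From mathcomp Require Import all_boot.
Set Implicit Arguments. Unset Strict Implicit. Unset Printing Implicit Defensive.

Definition is_poset (T : Type) (le : T -> T -> Prop) : Prop :=
  (forall x, le x x) /\
  (forall x y, le x y -> le y x -> x = y) /\
  (forall x y z, le x y -> le y z -> le x z).

Definition comparable (T : Type) (le : T -> T -> Prop) (x y : T) : Prop :=
  le x y \/ le y x.

Definition is_antichain (T : Type) (le : T -> T -> Prop) (X : T -> Prop) : Prop :=
  forall x y, X x -> X y -> x <> y -> ~ comparable le x y.

Definition is_max_antichain (T : Type) (le : T -> T -> Prop) (X : T -> Prop) : Prop :=
  is_antichain le X /\ forall q, exists2 x, X x & comparable le q x.

Definition has_three_elements (T : Type) (X : T -> Prop) : Prop :=
  exists a b c, [/\ a <> b, a <> c, b <> c &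
    forall x, X x <-> (x = a \/ x = b \/ x = c)].

Definition AM3 (T : Type) (le : T -> T -> Prop) : Type :=
  {X : T -> Prop | is_max_antichain le X /\ has_three_elements X}.

Definition AM3_le (T : Type) (le : T -> T -> Prop) (X Y : AM3 le) : Prop :=
  forall x, proj1_sig X x -> exists2 y, proj1_sig Y y & le x y.

Definition UAM3 (T : Type) (le : T -> T -> Prop) : Type :=
  {q : T | exists X : AM3 le, proj1_sig X q}.

Definition UAM3_le (T : Type) (le : T -> T -> Prop) (p q : UAM3 le) : Prop :=
  le (proj1_sig p) (proj1_sig q).

(* finite subsets of N = strictly increasing lists (increasing enumerations) *)
Definition fin_subset (s : seq nat) : Prop := sorted ltn s.

Definition proper_subset (s t : seq nat) : Prop :=
  {subset s <= t} /\ s <> t.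

Definition infinite_set (X : nat -> Prop) : Prop :=
  forall n, exists m, n <= m /\ X m.

Definition initial_segment (s : seq nat) (X : nat -> Prop) : Prop :=
  fin_subset s /\ exists k, forall n, n \in s <-> (X n /\ n < k).

Definition union_of (B : seq nat -> Prop) (n : nat) : Prop :=
  exists2 s, B s & n \in s.

Definition infinite_family (B : seq nat -> Prop) : Prop :=
  forall l : seq (seq nat), exists2 s, B s & s \notin l.

Definition barrier (B : seq nat -> Prop) : Prop :=
  [/\ (forall s, B s -> fin_subset s),
      infinite_family B,
      (forall s t, B s -> B t -> ~ proper_subset s t) &
      (forall X : nat -> Prop, infinite_set X -> (forall n, X n -> union_of B n) ->
         exists s, [/\ B s, s <> [::] & initial_segment s X])].

(* s <| t : there is a finite r with s a proper initial segment of r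
   and t = r minus its least element *)
Definition tri (s t : seq nat) : Prop :=
  exists r, [/\ fin_subset r, size s < size r, s = take (size s) r & t = behead r].

Definition good (A : Type) (leA : A -> A -> Prop) (B : seq nat -> Prop)
  (f : seq nat -> A) : Prop :=
  exists s t, [/\ B s, B t, tri s t & leA (f s) (f t)].

(* bqo: every map from a barrier is good (every barrier has countable
   order type, so this is "alpha-bqo for every countable alpha") *)
Definition bqo (A : Type) (leA : A -> A -> Prop) : Prop :=
  forall B, barrier B -> forall f : seq nat -> A, good leA B f.

(* The poset Q is the disjoint union of an antichain of points A_n and two
   chains B_n, C_n, ordered by the chains and C_i < A_j < B_k for i < j < k.
   Its three-element maximal antichains are exactly the levels
   {A_n, B_n, C_n}, and level m is dominated by level n iff m <= n, so
   AM_3(Q) is a copy of omega.  Omega is bqo: inside a barrier every element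
   s that is an initial segment of an infinite set Y has a successor s <| t
   that is an initial segment of Y minus its least element, so a bad map into
   omega would yield an infinite strictly decreasing sequence of naturals.
   On the other hand the union of AM_3(Q) contains the infinite antichain
   {A_n}, so it is not even wqo. *)

From Stdlib Require Import ClassicalEpsilon Wf_nat.
From mathcomp Require Import all_boot zify.
Set Implicit Arguments. Unset Strict Implicit. Unset Printing Implicit Defensive.
Set Bullet Behavior "Strict Subproofs".

Lemma bqo_comap (A A' : Type) (leA : A -> A -> Prop) (leA' : A' -> A' -> Prop)
    (f : A -> A') :
  (forall x y, leA' (f x) (f y) -> leA x y) -> bqo leA' -> bqo leA.
Proof.
move=> f_refl bqoA' B barB g.
have [s [t [Bs Bt st le_st]]] := bqoA' B barB (f \o g).
by exists s, t; split=> //; apply: f_refl.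
Qed.

Lemma mem_initial_segment s Y n : initial_segment s Y -> n \in s -> Y n.
Proof. by move=> [_ [k sk]] /sk []. Qed.

Lemma initial_segment_head h s Y :
  initial_segment (h :: s) Y -> Y h /\ forall n, Y n -> h <= n.
Proof.
move=> seg; split=> [|n Yn]; first exact: mem_initial_segment seg (mem_head h s).
case: seg => sorted_hs [k sk]; rewrite leqNgt; apply/negP => lt_nh.
have [_ lt_hk] := proj1 (sk h) (mem_head h s).
have /sk : Y n /\ n < k by split=> //; lia.
rewrite inE => /orP [/eqP|ns]; first lia.
by have := allP (order_path_min ltn_trans sorted_hs) n ns; lia.
Qed.

Lemma initial_segment_cons h t Y :
  Y h -> (forall n, Y n -> h <= n) ->
  initial_segment t (fun n => Y n /\ h < n) -> initial_segment (h :: t) Y.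
Proof.
move=> Yh h_min [sorted_t [k tk]]; split.
  by rewrite /fin_subset /= path_min_sorted //; apply/allP => n /tk [[_ ?] _].
exists (maxn k h.+1) => n; rewrite inE; split.
  by case/orP => [/eqP -> | /tk [[Yn ?] ?]]; split=> //; lia.
move=> [Yn lt_n]; case: (eqVneq n h) => [// | ne_nh] /=.
by apply/tk; have := h_min n Yn; split; [split|]=> //; lia.
Qed.

Lemma sorted_prefix_filter_ltn k r : sorted ltn r -> prefix [seq n <- r | n < k] r.
Proof.
elim: r => [|x r IH] //= sorted_xr; case: ifP => lt_xk.
  by rewrite eqxx IH //; apply: path_sorted sorted_xr.
rewrite (@eq_in_filter _ _ pred0) ?filter_pred0 // => n nr.
by apply/negbTE; have := allP (order_path_min ltn_trans sorted_xr) n nr; lia.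
Qed.

Lemma initial_segment_prefix s r Y :
  initial_segment s Y -> initial_segment r Y -> prefix s r \/ prefix r s.
Proof.
move=> [sorted_s [k1 sk]] [sorted_r [k2 rk]].
wlog le_k : s r k1 k2 sorted_s sorted_r sk rk / k1 <= k2.
  move=> wlog; case: (leqP k1 k2) => [|/ltnW] le_k; first exact: wlog le_k.
  by case: (wlog r s k2 k1 sorted_r sorted_s rk sk le_k); [right|left].
left; suff -> : s = [seq n <- r | n < k1] by apply: sorted_prefix_filter_ltn.
apply: (irr_sorted_eq ltn_trans ltnn sorted_s (sorted_filter ltn_trans _ sorted_r)).
move=> n; rewrite mem_filter; apply/idP/idP.
  by move/sk => [Yn lt_n]; rewrite lt_n; apply/rk; split=> //; lia.
by case/andP => lt_n /rk [Yn _]; apply/sk.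
Qed.

Lemma sorted_ltn_subseq_iota n s :
  sorted ltn s -> all (fun x => x < n) s -> subseq s (iota 0 n).
Proof.
move=> sorted_s s_lt; suff -> : s = [seq x <- iota 0 n | x \in s] by apply: filter_subseq.
apply: (irr_sorted_eq ltn_trans ltnn sorted_s).
  by apply: sorted_filter; [apply: ltn_trans | apply: iota_ltn_sorted].
move=> x; rewrite mem_filter mem_iota add0n.
by case xs: (x \in s); rewrite //= (allP s_lt x xs).
Qed.

Section Barrier.

Variable B : seq nat -> Prop.
Hypothesis barB : barrier B.

Lemma barrier_union_infinite : infinite_set (union_of B).
Proof.
case: barB => B_sorted B_inf _ _ n; apply: NNPP => union_lt_n.
have B_lt_n s : B s -> all (fun x => x < n) s.
  move=> Bs; apply/allP => x xs; rewrite ltnNge; apply/negP => le_nx.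
  by apply: union_lt_n; exists x; split=> //; exists s.
pose mask_iota (m : n.-tuple bool) := mask m (iota 0 n).
have [s Bs /negP] := B_inf (codom mask_iota); apply.
have /subseqP [m size_m ->] := sorted_ltn_subseq_iota (B_sorted s Bs) (B_lt_n s Bs).
rewrite size_iota in size_m.
exact: (codom_f mask_iota (Tuple (introT eqP size_m))).
Qed.

Definition barrier_segment (Y : nat -> Prop) (s : seq nat) : Prop :=
  [/\ infinite_set Y, forall n, Y n -> union_of B n, B s, s <> [::]
    & initial_segment s Y].

Lemma barrier_segment_exists : exists Y s, barrier_segment Y s.
Proof.
case: barB => _ _ _ B_segment; have union_inf := barrier_union_infinite.
have [s [Bs s_nil seg]] := B_segment _ union_inf (fun n un => un).
by exists (union_of B), s.
Qed.

Lemma barrier_segment_tri Y s :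
  barrier_segment Y s -> exists Y' t, barrier_segment Y' t /\ tri s t.
Proof.
case: barB => _ _ B_anti B_segment [Y_inf Y_union Bs s_nil seg].
case: s s_nil Bs seg => [//|h s] _ Bs seg.
have [Yh h_min] := initial_segment_head seg.
pose Y' n := Y n /\ h < n.
have Y'_inf : infinite_set Y'.
  by move=> n; have [m [le_m Ym]] := Y_inf (maxn n h.+1); exists m; do !split=> //; lia.
have Y'_union n : Y' n -> union_of B n by move=> [/Y_union].
have [t [Bt t_nil seg_t]] := B_segment Y' Y'_inf Y'_union.
exists Y', t; split=> //.
have seg_ht := initial_segment_cons Yh h_min seg_t.
(* [t] misses [h], so the antichain property keeps it out of [h :: s]; since
   [h :: s] and [h :: t] are both initial segments of [Y], the former must be
   a proper prefix of the latter. *)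
have t_not_sub : ~ {subset t <= h :: s}.
  move=> t_sub; apply: (B_anti t (h :: s) Bt Bs); split=> // eq_t.
  have /(mem_initial_segment seg_t) [_] : h \in t by rewrite eq_t mem_head.
  by rewrite ltnn.
case: (initial_segment_prefix seg seg_ht) => [pre | /prefixP [u eq_s]]; last first.
  by case: t_not_sub => x xt; rewrite eq_s mem_cat inE xt orbT.
exists (h :: t); split=> //; [by case: seg_ht | | by apply/esym/eqP; rewrite -prefixE].
rewrite ltn_neqAle size_prefix // andbT; apply/negP => /eqP size_eq.
case: t_not_sub => x xt; move: pre; rewrite prefixE size_eq take_size => /eqP <-.
by rewrite inE xt orbT.
Qed.

End Barrier.

Lemma bqo_leq : bqo (fun m n : nat => m <= n).
Proof.
move=> B barB f; apply: NNPP => bad.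
have f_desc Y s :
    barrier_segment B Y s -> exists Y' t, barrier_segment B Y' t /\ f t < f s.
  move=> seg; have [Y' [t [seg_t st]]] := barrier_segment_tri barB seg.
  exists Y', t; split=> //; rewrite ltnNge; apply/negP => le_st; apply: bad.
  by case: seg seg_t => _ _ Bs _ _ [_ _ Bt _ _]; exists s, t.
suff no_segment r Y s : barrier_segment B Y s -> f s <= r -> False.
  by have [Y [s seg]] := barrier_segment_exists barB; apply: no_segment seg (leqnn _).
elim: r Y s => [|r IH] Y s /f_desc [Y' [t [seg_t lt_ft]]] le_fs; first by lia.
by apply: IH seg_t _; lia.
Qed.

Definition singletons (s : seq nat) : Prop := exists n, s = [:: n].

Lemma barrier_singletons : barrier singletons.
Proof.
split.
- by move=> s [n ->].
- move=> l; exists [:: (\max_(s <- l) head 0 s).+1]; first by eexists.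
  by apply/negP => /(leq_bigmax_seq (P := xpredT) (F := head 0)) /(_ isT); rewrite ltnn.
- move=> s t [a ->] [b ->] [sub_ab]; apply.
  by have := sub_ab a (mem_head a [::]); rewrite inE => /eqP ->.
- move=> X X_inf _; have [n [_ Xn]] := X_inf 0.
  have [m [[Xm m_min] _]] :=
    dec_inh_nat_subset_has_unique_least_element X (fun n => classic (X n))
      (ex_intro X n Xn).
  exists [:: m]; split=> //; first by exists m.
  split=> //; exists m.+1 => k; rewrite inE; split=> [/eqP -> | [Xk lt_k]] //.
  by have /leP := m_min k Xk; lia.
Qed.

Lemma tri_singletons i j : tri [:: i] [:: j] -> i < j.
Proof. by case=> [[|x [|y r]]] [] //= /andP [lt_xy _] _ [->] [-> _]. Qed.

Lemma bqo_good_seq (A : Type) (leA : A -> A -> Prop) :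
  bqo leA -> forall a : nat -> A, exists i j, i < j /\ leA (a i) (a j).
Proof.
move=> bqoA a.
have [s [t [[i ->] [j ->] st le_ij]]] :=
  bqoA _ barrier_singletons (fun s => a (head 0 s)).
by exists i, j; split=> //; apply: tri_singletons.
Qed.

Definition triple (T : Type) (a b c : T) (x : T) : Prop := x = a \/ x = b \/ x = c.

Lemma has_three_elements_avoid (T : Type) (X : T -> Prop) (u v : T) :
  has_three_elements X -> exists2 x, X x & x <> u /\ x <> v.
Proof.
move=> [a [b [c [ne_ab ne_ac ne_bc abc]]]]; apply: NNPP => no_x.
have in_uv x : X x -> x = u \/ x = v.
  move=> Xx; apply: NNPP => nx; apply: no_x.
  by exists x => //; split=> e; apply: nx; auto.
have [Xa Xb Xc] : [/\ X a, X b & X c] by split; apply/abc; auto.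
by move: (in_uv a Xa) (in_uv b Xb) (in_uv c Xc) => [] ea [] eb [] ec; congruence.
Qed.

Lemma has_three_elements_eq (T : Type) (X : T -> Prop) (p q r : T) :
  has_three_elements X -> X p -> X q -> X r -> [/\ p <> q, p <> r & q <> r] ->
  forall x, X x <-> triple p q r x.
Proof.
move=> [a [b [c [ne_ab ne_ac ne_bc abc]]]] Xp Xq Xr [ne_pq ne_pr ne_qr] x.
split=> [Xx | [->|[->|->]]] //; apply: NNPP => nx.
have [ne_xp ne_xq ne_xr] : [/\ x <> p, x <> q & x <> r].
  by split=> e; apply: nx; rewrite /triple; auto.
move: (abc x) (abc p) (abc q) (abc r) => [+ _] [+ _] [+ _] [+ _].
by move=> /(_ Xx) [ex|[ex|ex]] /(_ Xp) [ep|[ep|ep]] /(_ Xq) [eq|[eq|eq]]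
  /(_ Xr) [er|[er|er]]; congruence.
Qed.

Lemma antichain_comparable_eq (T : Type) (le : T -> T -> Prop) (X : T -> Prop) x y :
  is_antichain le X -> X x -> X y -> comparable le x y -> x = y.
Proof. by move=> anti Xx Xy cxy; apply: NNPP => nxy; apply: anti Xx Xy nxy cxy. Qed.

Inductive Q : Type := QA of nat | QB of nat | QC of nat.

Definition Qleb (x y : Q) : bool :=
  match x, y with
  | QA i, QA j => i == j
  | QB i, QB j => i <= j
  | QC i, QC j => i <= j
  | QA i, QB j => i < j
  | QC i, QA j => i < j
  | QC i, QB j => i.+2 <= j
  | _, _ => false
  end.

Definition Qle (x y : Q) : Prop := Qleb x y.

Definition idx (x : Q) : nat := match x with QA i | QB i | QC i => i end.

Definition level (n : nat) : Q -> Prop := triple (QA n) (QB n) (QC n).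

Lemma Qle_poset : is_poset Qle.
Proof.
rewrite /Qle; split; [|split].
- by case=> i /=.
- by case=> i [] j //= le_ij le_ji; congr (_ _); lia.
- by case=> i [] j [] k //=; lia.
Qed.

Lemma antichain_QB_eq X i j : is_antichain Qle X -> X (QB i) -> X (QB j) -> i = j.
Proof.
move=> anti Xi Xj; suff [] : QB i = QB j by [].
by apply: antichain_comparable_eq anti Xi Xj _; rewrite /comparable /Qle /=; lia.
Qed.

Lemma antichain_QC_eq X i j : is_antichain Qle X -> X (QC i) -> X (QC j) -> i = j.
Proof.
move=> anti Xi Xj; suff [] : QC i = QC j by [].
by apply: antichain_comparable_eq anti Xi Xj _; rewrite /comparable /Qle /=; lia.
Qed.

Lemma max_antichain_QB X : is_max_antichain Qle X -> exists m, X (QB m).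
Proof.
by case=> _ /(_ (QB 0)) [[i|i|i] Xx]; rewrite /comparable /Qle /=; [lia | exists i | lia].
Qed.

Lemma max_antichain_QC X K :
  is_max_antichain Qle X -> (forall x, X x -> idx x < K) -> exists k, X (QC k).
Proof.
case=> _ /(_ (QC K)) [[i|i|i] Xx] /=; rewrite /comparable /Qle /= => cmp /(_ _ Xx) /=;
  [lia | lia | by exists i].
Qed.

Lemma AM3_triple X : is_max_antichain Qle X -> has_three_elements X ->
  exists j m k, forall x, X x <-> triple (QA j) (QB m) (QC k) x.
Proof.
move=> maxX threeX; have [m XBm] := max_antichain_QB maxX.
have [k XCk] : exists k, X (QC k).
  have [a [b [c [_ _ _ abc]]]] := threeX.
  apply: (max_antichain_QC (K := (idx a + idx b + idx c).+1) maxX) => x.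
  by case/abc => [->|[->|->]]; lia.
have [[j|i|i] Xx [ne_B ne_C]] := has_three_elements_avoid (QB m) (QC k) threeX.
- by exists j, m, k; apply: has_three_elements_eq.
- by case: ne_B; rewrite (antichain_QB_eq maxX.1 Xx XBm).
- by case: ne_C; rewrite (antichain_QC_eq maxX.1 Xx XCk).
Qed.

Lemma max_antichain_triple X j m k :
  is_max_antichain Qle X -> (forall x, X x <-> triple (QA j) (QB m) (QC k) x) ->
  j = m /\ k = m.
Proof.
move=> [anti maxX] eqX.
have incomparable x y : X x -> X y -> x <> y -> ~~ Qleb x y.
  by move=> Xx Xy ne_xy; apply/negP => le_xy; apply: anti Xx Xy ne_xy _; left.
have le_mj : m <= j.
  rewrite leqNgt; apply: (incomparable (QA j) (QB m)) => //;
    by apply/eqX; rewrite /triple; auto.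
have le_jk : j <= k.
  rewrite leqNgt; apply: (incomparable (QC k) (QA j)) => //;
    by apply/eqX; rewrite /triple; auto.
(* A_m and A_k cannot be comparable with B_m or C_k, only with A_j. *)
have eq_jm : j = m.
  by have [x /eqX [->|[->|->]]] := maxX (QA m); rewrite /comparable /Qle /=; lia.
have eq_jk : j = k.
  by have [x /eqX [->|[->|->]]] := maxX (QA k); rewrite /comparable /Qle /=; lia.
by split; lia.
Qed.

Lemma level_AM3 n : is_max_antichain Qle (level n) /\ has_three_elements (level n).
Proof.
split; [split|]; last by exists (QA n), (QB n), (QC n); split.
- move=> x y [->|[->|->]] [->|[->|->]] ne_xy; try by case: ne_xy.
  all: by rewrite /comparable /Qle /=; case; lia.
- rewrite /comparable /Qle; case=> j.
  + case: (ltngtP j n) => [lt_jn | lt_nj | ->].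
    * by exists (QB n); [rewrite /level /triple; auto | left].
    * by exists (QC n); [rewrite /level /triple; auto | right].
    * by exists (QA n); [rewrite /level /triple; auto | left => /=].
  + by exists (QB n); [rewrite /level /triple; auto | rewrite /=; lia].
  + by exists (QC n); [rewrite /level /triple; auto | rewrite /=; lia].
Qed.

Lemma AM3_level (X : AM3 Qle) : exists n, forall x, proj1_sig X x <-> level n x.
Proof.
case: X => X [maxX threeX] /=; have [j [m [k eqX]]] := AM3_triple maxX threeX.
by have [ejm ekm] := max_antichain_triple maxX eqX; subst; exists m.
Qed.

Lemma level_dominated m n :
  m <= n -> forall x, level m x -> exists2 y, level n y & Qle x y.
Proof.
move=> le_mn x [->|[->|->]]; rewrite /level /triple /Qle.
- move: le_mn; rewrite leq_eqVlt => /orP [/eqP <- | lt_mn].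
  + by exists (QA m); rewrite /= ?eqxx; auto.
  + by exists (QB n); auto.
- by exists (QB n); auto.
- by exists (QC n); auto.
Qed.

Lemma AM3_bqo : bqo (@AM3_le Q Qle).
Proof.
have [rank rankP] := choice _ AM3_level.
have rank_refl (X Y : AM3 Qle) : rank X <= rank Y -> AM3_le X Y.
  move=> le_rank x /(rankP X) /(level_dominated le_rank) [y /(rankP Y) Yy le_xy].
  by exists y.
exact: bqo_comap rank_refl bqo_leq.
Qed.

Lemma UAM3_not_bqo : ~ bqo (@UAM3_le Q Qle).
Proof.
move=> /bqo_good_seq good.
have QA_in n : exists X : AM3 Qle, proj1_sig X (QA n).
  by exists (exist _ (level n) (level_AM3 n)); left.
have [i [j [lt_ij]]] := good (fun n => exist _ (QA n) (QA_in n)).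
by rewrite /UAM3_le /Qle /= => /eqP; lia.
Qed.

Theorem corollary6p7 :
  exists (T : Type) (le : T -> T -> Prop),
    [/\ is_poset le, bqo (@AM3_le T le) & ~ bqo (@UAM3_le T le)].
Proof.
by exists Q, Qle; split; [apply: Qle_poset | apply: AM3_bqo | apply: UAM3_not_bqo].
Qed.
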